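(* Let $k \ge 1$ be an integer, let $H$ be a graph, and let $x_1,\dots,x_k,y_1,\dots,y_k$ be $2k$ distinct vertices of $H$ such that $Z = \{x_1,\dots,x_k,y_1,\dots,y_k\}$ is an independent set of $H$. If $\tau(H) \ge 2k-1$, then $H$ contains a matching $\{m_1,\dots,m_k\}$ of size $k$ such that $m_i \cap \{x_j,y_j\} = \emptyset$ for all $i \neq j$.
   Context: All graphs are finite and simple. $\tau(H)$ denotes the vertex cover number of $H$ (minimum size of a vertex set meeting every edge of $H$). Edges are regarded as 2-element vertex sets. *)

(* A simple graph H on a finite vertex type T is a
   symmetric irreflexive relation e : rel T. *)
From mathcomp Require Import all_boot.
Set Implicit Arguments. Unset Strict Implicit. Unset Printing Implicit Defensive.

Definition vcover (T : finType) (e : rel T) (C : {set T}) : bool :=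
  [forall u, forall v, e u v ==> (u \in C) || (v \in C)].

(* tau(H): minimum size of a vertex cover (setT is always a cover,
   so #|T| is a valid default for the minimum). *)
Definition tau (T : finType) (e : rel T) : nat :=
  \big[minn/#|T|]_(C : {set T} | vcover e C) #|C|.

Definition independent (T : finType) (e : rel T) (Z : {set T}) : bool :=
  [forall u in Z, forall v in Z, ~~ e u v].

Definition is_edge (T : finType) (e : rel T) (m : {set T}) : Prop :=
  exists u v, e u v /\ m = [set u; v].

(* Let M' be a maximal matching of H - Z, and consider the bipartite graph
   joining each index a to the vertices outside Z and V(M') adjacent to x_a or
   y_a.  König's theorem gives a matching D of it together with a vertex cover
   of the same size; replacing every index a in that cover by x_a and y_a and
   adding V(M') yields a vertex cover of H of size at most 2|M'| + 2|D|.  Hence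
   tau(H) >= 2k - 1 forces |M'| + |D| >= k.  Indices matched by D receive the
   edge from x_a or y_a to their partner, and the remaining ones receive
   distinct edges of M', which avoid Z altogether. *)

From mathcomp Require Import all_boot zify.
Set Implicit Arguments. Unset Strict Implicit. Unset Printing Implicit Defensive.

Lemma geq_bigminn (I : eqType) (s : seq I) (P : pred I) (F : I -> nat) m j :
  j \in s -> P j -> \big[minn/m]_(i <- s | P i) F i <= F j.
Proof.
elim: s => [//|i s IHs]; rewrite inE big_cons => /predU1P[<- -> | js Pj].
  exact: geq_minl.
by case: ifP => _; [exact: leq_trans (geq_minr _ _) (IHs js Pj) | exact: IHs].
Qed.

Lemma tau_le_vcover (T : finType) (e : rel T) (C : {set T}) :
  vcover e C -> tau e <= #|C|.
Proof. exact: geq_bigminn (mem_index_enum C). Qed.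

Lemma disjoint_set2 (T : finType) (a b : T) (C : {set T}) :
  a \notin C -> b \notin C -> [disjoint [set a; b] & C].
Proof.
move=> Ca Cb; apply/pred0P => t /=; rewrite !inE.
by case: eqP => [-> | _]; [|case: eqP => [-> | _]]; rewrite ?(negbTE Ca) ?(negbTE Cb) ?andbF.
Qed.

Lemma disjoint_setD (T : finType) (A B : {set T}) : [disjoint A & B :\: A].
Proof. by rewrite disjoint_sym; apply/setDidPl; rewrite setDDl setUid. Qed.

Lemma disjoint_nth_pairs (T : finType) (t0 : T) (su sv : seq T) p q :
  size su = size sv -> uniq (su ++ sv) -> p < size su -> q < size su -> p != q ->
  [disjoint [set nth t0 su p; nth t0 sv p] & [set nth t0 su q; nth t0 sv q]].
Proof.
move=> size_s uniq_s ltp ltq pq.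
have nth_s i : i < size su ->
    nth t0 su i = nth t0 (su ++ sv) i /\ nth t0 sv i = nth t0 (su ++ sv) (size su + i).
  by move=> lti; rewrite !nth_cat lti ltnNge leq_addr addKn.
case: (nth_s p ltp) (nth_s q ltq) => -> -> [-> ->].
by apply: disjoint_set2; rewrite !inE !nth_uniq ?size_cat -?size_s ?ltn_add2l //; lia.
Qed.

Lemma maximal_matching (T : finType) (e : rel T) (t0 : T) (W : {set T}) :
  irreflexive e ->
  exists su sv : seq T,
    [/\ size su = size sv, uniq (su ++ sv), {subset su ++ sv <= W},
        forall i, i < size su -> e (nth t0 su i) (nth t0 sv i) &
        {in W &, forall u v, u \notin su ++ sv -> v \notin su ++ sv -> ~~ e u v}].
Proof.
move=> e_irr; have [n] := ubnP #|W|; elim: n => // n IHn in W *; rewrite ltnS => sizeW.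
case: (boolP [exists u, exists v, [&& u \in W, v \in W & e u v]]); last first.
  move=> /existsPn noEdge; exists [::], [::]; split=> // u v Wu Wv _ _.
  by move/existsPn: (noEdge u) => /(_ v); rewrite Wu Wv.
case/existsP => u /existsP[v /and3P[Wu Wv euv]].
have uv : u != v by apply: contraTneq euv => ->; rewrite e_irr.
have Wuv : #|W :\ u :\ v| < n.
  by move: sizeW; rewrite (cardsD1 u W) Wu (cardsD1 v (W :\ u)) !inE eq_sym uv Wv; lia.
have [su [sv [size_su uniq_s sub_s e_s max_s]]] := IHn _ Wuv.
have out_s t : t \in su ++ sv -> [&& t != v, t != u & t \in W] by move/sub_s; rewrite !inE.
have sW t : t \in su ++ sv -> t \in W by case/out_s/and3P.
have su_u : u \notin su ++ sv by apply/negP => /out_s; rewrite eqxx andbF.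
have sv_v : v \notin su ++ sv by apply/negP => /out_s; rewrite eqxx.
exists (u :: su), (v :: sv); split.
- by rewrite /= size_su.
- rewrite cat_cons cons_uniq -cat1s uniq_catCA /= uniq_s andbT sv_v.
  by move: su_u; rewrite !mem_cat inE (negbTE uv) andbT.
- move=> t; rewrite cat_cons inE mem_cat inE => /or4P[/eqP-> | ts | /eqP-> | ts] //.
    by rewrite sW // mem_cat ts.
  by rewrite sW // mem_cat ts orbT.
- by case=> [|i] //= /e_s.
move=> u' v' Wu' Wv'; rewrite !mem_cat !inE !negb_or => /andP[/andP[u'u u'su] /andP[u'v u'sv]].
case/andP=> /andP[v'u v'su] /andP[v'v v'sv].
by apply: max_s; rewrite ?inE ?mem_cat ?negb_or ?u'u ?u'v ?v'u ?v'v ?u'su ?u'sv ?v'su ?v'sv.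
Qed.

Section KonigDeficiency.

Variables (A B : finType) (r : A -> B -> bool) (b0 : B).
Implicit Types (S D : {set A}) (g : A -> B).

Definition nbhd (B0 : {set B}) (S : {set A}) : {set B} :=
  [set b in B0 | [exists a in S, r a b]].

(* [(A0 :\: S) :|: nbhd B0 S] is a vertex cover of the bipartite graph
   [r] between [A0] and [B0], and [cover_cost] is its size. *)
Definition cover_cost (A0 : {set A}) (B0 : {set B}) (S : {set A}) : nat :=
  #|A0 :\: S| + #|nbhd B0 S|.

Definition matches_into (B0 : {set B}) (D : {set A}) (g : A -> B) : Prop :=
  {in D &, injective g} /\ {in D, forall a, (g a \in B0) && r a (g a)}.

Definition konig_bound (A0 : {set A}) (B0 : {set B}) : Prop :=
  exists (S D : {set A}) (g : A -> B),
    [/\ S \subset A0, D \subset A0, matches_into B0 D g & cover_cost A0 B0 S <= #|D|].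

Lemma nbhd_sub B0 S : nbhd B0 S \subset B0.
Proof. by apply/subsetP => b; rewrite inE => /andP[]. Qed.

Lemma cover_cost_subset A0 B0 (S S1 : {set A}) : S1 \subset S ->
  cover_cost A0 B0 S1 <= #|A0 :\: S| + cover_cost S (nbhd B0 S) S1.
Proof.
move=> sS1S; rewrite /cover_cost addnA leq_add //.
  apply: leq_trans (leq_card_setU _ _); apply: subset_leq_card.
  by apply/subsetP => t; rewrite !inE => /andP[-> ->]; case: (t \in S).
apply/subset_leq_card/subsetP => b; rewrite !inE => /andP[-> /existsP[a /andP[aS1 rab]]].
by rewrite !andTb; apply/andP; split; apply/existsP; exists a; rewrite ?rab ?(subsetP sS1S) ?aS1.
Qed.

Lemma cover_cost_setU A0 B0 (S S2 : {set A}) :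
  cover_cost A0 B0 (S :|: S2) <= #|nbhd B0 S| + cover_cost (A0 :\: S) (B0 :\: nbhd B0 S) S2.
Proof.
rewrite /cover_cost addnCA leq_add //.
  by rewrite setDDl leqnn.
apply: leq_trans (leq_card_setU _ _); apply/subset_leq_card/subsetP => b.
rewrite !inE => /andP[B0b /existsP[a /andP[aS rab]]]; rewrite B0b /=.
case Nb: [exists a0 in S, r a0 b] => //=; apply/existsP; exists a; rewrite rab andbT.
by move: aS; rewrite inE => /orP[aS | //]; move/existsP: Nb => []; exists a; rewrite aS rab.
Qed.

Lemma cover_cost_setD1 (A0 : {set A}) (B0 : {set B}) S (a : A) (b : B) :
  cover_cost A0 B0 S <= (b \in nbhd B0 S) + (1 + cover_cost (A0 :\ a) (B0 :\ b) S).
Proof.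
have costA : #|A0 :\: S| <= 1 + #|A0 :\ a :\: S|.
  rewrite -(cards1 a); apply: leq_trans (leq_card_setU _ _).
  by apply/subset_leq_card/subsetP => t; rewrite !inE; case: eqP.
have costB : #|nbhd B0 S| <= (b \in nbhd B0 S) + #|nbhd (B0 :\ b) S|.
  case Nb: (b \in nbhd B0 S) => /=.
    rewrite -(cards1 b); apply: leq_trans (leq_card_setU _ _).
    by apply/subset_leq_card/subsetP => t; rewrite !inE; case: eqP.
  apply/subset_leq_card/subsetP => t; rewrite !inE; case: eqP => [-> | //].
  by move: Nb; rewrite inE => ->.
by move: costA costB; rewrite /cover_cost; case: (b \in _) => /=; lia.
Qed.

Lemma matches_into_setU (B1 B2 : {set B}) (D1 D2 : {set A}) (g1 g2 : A -> B) :
  [disjoint B1 & B2] -> matches_into B1 D1 g1 -> matches_into B2 D2 g2 ->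
  matches_into (B1 :|: B2) (D1 :|: D2) (fun a => if a \in D1 then g1 a else g2 a).
Proof.
move=> B12 [g1_inj g1_r] [g2_inj g2_r].
have B1B2 b : b \in B1 -> b \in B2 -> False.
  by move=> B1b; rewrite (disjointFr B12 B1b).
split=> [a1 a2 | a]; rewrite !inE.
  case D1a1: (a1 \in D1); case D1a2: (a2 \in D1) => //= D2a1 D2a2; first exact: g1_inj.
  - move=> g12; case/andP: (g1_r _ D1a1) (g2_r _ D2a2) => + _ /andP[+ _].
    by rewrite g12 => /B1B2.
  - move=> g12; case/andP: (g2_r _ D2a1) (g1_r _ D1a2) => + _ /andP[+ _].
    by rewrite g12 => /[swap] /B1B2.
  exact: g2_inj.
case D1a: (a \in D1) => /=; first by case/andP: (g1_r _ D1a) => -> ->.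
by case/g2_r/andP => -> ->; rewrite orbT.
Qed.

Lemma matches_into_setU1 (B0 : {set B}) D g (a : A) (b : B) : a \notin D -> b \in B0 -> r a b ->
  matches_into (B0 :\ b) D g ->
  matches_into B0 (a |: D) (fun a' => if a' == a then b else g a').
Proof.
move=> Da B0b rab [g_inj g_r].
have gD a' : a' \in D -> (g a' != b) && (g a' \in B0) && r a' (g a').
  by move/g_r; rewrite !inE.
split=> [a1 a2 | a']; rewrite !inE.
  case: eqP => [-> | _]; case: eqP => [-> | _] //= D1 D2 g12.
  - by case/andP: (gD _ D2) => /andP[]; rewrite g12 eqxx.
  - by case/andP: (gD _ D1) => /andP[]; rewrite g12 eqxx.
  exact: g_inj.
by case: eqP => [-> | _ /gD /andP[/andP[_ ->] ->]]; rewrite ?B0b ?rab.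
Qed.

Section KonigInduction.

Variables (A0 : {set A}) (B0 : {set B}).

Definition min_cover_cost S :=
  S \subset A0 /\ forall S1, S1 \subset A0 -> cover_cost A0 B0 S <= cover_cost A0 B0 S1.

Lemma konig_bound_no_edge : nbhd B0 A0 = set0 -> konig_bound A0 B0.
Proof.
move=> noEdge; exists A0, set0, (fun=> b0); split; rewrite ?sub0set //.
  by split=> a; rewrite inE.
by rewrite /cover_cost setDv noEdge !cards0.
Qed.

Lemma konig_bound_split S : min_cover_cost S ->
  konig_bound S (nbhd B0 S) -> konig_bound (A0 :\: S) (B0 :\: nbhd B0 S) ->
  konig_bound A0 B0.
Proof.
move=> [sSA0 minS] [S1 [D1 [g1 [sS1S sD1S mD1 costD1]]]] [S2 [D2 [g2 [sS2 sD2 mD2 costD2]]]].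
have sS2A0 : S2 \subset A0 := subset_trans sS2 (subsetDl _ _).
exists S, (D1 :|: D2), (fun a => if a \in D1 then g1 a else g2 a); split=> //.
- by rewrite subUset (subset_trans sD1S sSA0) (subset_trans sD2 (subsetDl _ _)).
- rewrite -[B0 in matches_into B0](setID B0 (nbhd B0 S)) (setIidPr (nbhd_sub B0 S)).
  exact: matches_into_setU (disjoint_setD _ _) mD1 mD2.
have disjD12 : [disjoint D1 & D2].
  apply: disjointWl sD1S _; rewrite disjoint_sym; apply: disjointWl sD2 _.
  by rewrite disjoint_sym disjoint_setD.
have costN : #|nbhd B0 S| <= #|D1|.
  move: (minS S1 (subset_trans sS1S sSA0)) (cover_cost_subset A0 B0 sS1S) costD1.
  by rewrite {1}/cover_cost; lia.
have costA : #|A0 :\: S| <= #|D2|.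
  have sSS2 : S :|: S2 \subset A0 by rewrite subUset sSA0.
  by move: (minS _ sSS2) (cover_cost_setU A0 B0 S S2) costD2; rewrite {1}/cover_cost; lia.
have /eqP -> : #|D1 :|: D2| == #|D1| + #|D2| by rewrite (leq_card_setU D1 D2).
by rewrite /cover_cost addnC leq_add.
Qed.

Lemma konig_bound_add_edge S a b : min_cover_cost S ->
  a \in A0 -> b \in B0 -> r a b ->
  (forall S1, S1 \subset A0 :\ a -> b \in nbhd B0 S1 -> cover_cost A0 B0 S < cover_cost A0 B0 S1) ->
  konig_bound (A0 :\ a) (B0 :\ b) -> konig_bound A0 B0.
Proof.
move=> [sSA0 minS] A0a B0b rab tightb [S1 [D1 [g1 [sS1 sD1 mD1 costD1]]]].
have sS1A0 : S1 \subset A0 := subset_trans sS1 (subD1set _ _).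
have D1a : a \notin D1 by apply/negP => /(subsetP sD1); rewrite !inE eqxx.
exists S, (a |: D1), (fun a' => if a' == a then b else g1 a'); split=> //.
- by rewrite subUset sub1set A0a (subset_trans sD1 (subD1set _ _)).
- exact: matches_into_setU1.
rewrite cardsU1 D1a.
move: (minS _ sS1A0) (cover_cost_setD1 A0 B0 S1 a b) (tightb _ sS1) costD1.
by case: (b \in nbhd B0 S1) => /=; lia.
Qed.

End KonigInduction.

Theorem konig A0 B0 : konig_bound A0 B0.
Proof.
have [n] := ubnP (#|A0| + #|B0|); elim: n => // n IHn in A0 B0 *; rewrite ltnS => sizeA0B0.
case: (eqVneq (nbhd B0 A0) set0) => [noEdge | /set0Pn[b]]; first exact: konig_bound_no_edge.
rewrite inE => /andP[B0b /existsP[a /andP[A0a rab]]].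
case: (@arg_minnP _ A0 (fun S => S \subset A0) (cover_cost A0 B0) (subxx A0)) => S sSA0 minS.
have minCS : min_cover_cost A0 B0 S by [].
(* If some optimal S1 avoids a but reaches b, split the
   graph along S1 and its neighbourhood (both parts are strictly smaller);
   otherwise deleting a and b lowers the optimal cost by at most one. *)
case: (boolP [exists S1 : {set A}, [&& S1 \subset A0 :\ a, b \in nbhd B0 S1
                                    & cover_cost A0 B0 S1 <= cover_cost A0 B0 S]]).
  case/existsP => S1 /and3P[sS1 NS1b costS1].
  have sS1A0 : S1 \subset A0 := subset_trans sS1 (subD1set _ _).
  have ltS1 : #|S1| < #|A0|.
    apply/proper_card/properP; split=> //; exists a => //.
    by apply/negP => /(subsetP sS1); rewrite !inE eqxx.
  have ltB0N : #|B0 :\: nbhd B0 S1| < #|B0|.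
    by apply/proper_card/properP; split; [exact: subsetDl | exists b => //; rewrite inE NS1b].
  apply: (konig_bound_split (S := S1)); first by split=> // S2 /minS; apply: leq_trans.
    by apply: IHn; move: (subset_leq_card (nbhd_sub B0 S1)); lia.
  by apply: IHn; move: (subset_leq_card (subsetDl A0 S1)); lia.
move/existsPn => noTight; apply: (konig_bound_add_edge minCS A0a B0b rab).
  by move=> S1 sS1 NS1b; move: (noTight S1); rewrite sS1 NS1b ltnNge.
by apply: IHn; move: sizeA0B0; rewrite (cardsD1 a A0) (cardsD1 b B0) A0a B0b; lia.
Qed.

End KonigDeficiency.


Section MatchingFromCover.

Variables (T : finType) (e : rel T) (k : nat) (x y : 'I_k -> T).
Hypotheses (e_sym : symmetric e) (x_inj : injective x) (y_inj : injective y)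
  (xy_dist : forall i j, x i != y j).

Let Z := [set x i | i : 'I_k] :|: [set y i | i : 'I_k].
Hypothesis Z_indep : independent e Z.

Variables (t0 : T) (su sv : seq T).
Hypotheses (size_s : size su = size sv) (uniq_s : uniq (su ++ sv))
  (sub_s : {subset su ++ sv <= ~: Z})
  (edge_s : forall i, i < size su -> e (nth t0 su i) (nth t0 sv i))
  (max_s : {in ~: Z &, forall u v, u \notin su ++ sv -> v \notin su ++ sv -> ~~ e u v}).

Let M := [set t in su ++ sv].
Let B0 := ~: Z :\: M.
Let r (a : 'I_k) (b : T) := e (x a) b || e (y a) b.

Variables (S D : {set 'I_k}) (g : 'I_k -> T).
Hypotheses (mD : matches_into r B0 D g) (costD : cover_cost r setT B0 S <= #|D|).

Let C := M :|: [set x a | a in ~: S] :|: [set y a | a in ~: S] :|: nbhd r B0 S.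

Lemma xZ i : x i \in Z. Proof. by rewrite !inE imset_f. Qed.
Lemma yZ i : y i \in Z. Proof. by rewrite !inE imset_f ?orbT. Qed.

Lemma vcover_C : vcover e C.
Proof.
have cover_Z_B0 u v : u \in Z -> v \in B0 -> e u v -> (u \in C) || (v \in C).
  move=> Zu B0v euv.
  have [a rav uXY] : exists2 a, r a v & u \in [set x a; y a].
    by case/setUP: Zu => /imsetP[a _ uE]; subst u; exists a; rewrite /r ?euv ?orbT ?set21 ?set22.
  case Sa: (a \in S).
    have Nv : v \in nbhd r B0 S by rewrite inE B0v; apply/existsP; exists a; rewrite Sa.
    by rewrite /C !in_setU Nv !orbT.
  by case/set2P: uXY => ->; rewrite !inE imset_f ?orbT // inE Sa.
apply/forallP => u; apply/forallP => v; apply/implyP => euv.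
case Mu: (u \in su ++ sv); first by rewrite /C /M !in_setU in_set Mu.
case Mv: (v \in su ++ sv); first by rewrite /C /M !in_setU !in_set Mv !orbT.
have B0P t : t \notin Z -> t \notin su ++ sv -> t \in B0.
  by move=> Zt Mt; rewrite /B0 /M in_setD in_setC Zt in_set Mt.
case Zu: (u \in Z); case Zv: (v \in Z).
- by move/forallP: Z_indep => /(_ u); rewrite Zu => /forallP/(_ v); rewrite Zv euv.
- by apply: cover_Z_B0; rewrite ?B0P ?Zv ?Mv.
- by rewrite orbC; apply: cover_Z_B0; rewrite ?B0P ?Zu ?Mu // e_sym.
have : ~~ e u v by apply: max_s; rewrite ?in_setC ?Zu ?Zv ?Mu ?Mv.
by rewrite euv.
Qed.

Lemma card_C : #|C| <= 2 * size su + 2 * #|D|.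
Proof.
have cardM : #|M| <= 2 * size su.
  by rewrite cardsE; apply: leq_trans (card_size _) _; rewrite size_cat size_s; lia.
have cardX : #|[set x a | a in ~: S]| <= #|~: S| := leq_imset_card _ _.
have cardY : #|[set y a | a in ~: S]| <= #|~: S| := leq_imset_card _ _.
have cardC : #|C| <= #|M| + #|[set x a | a in ~: S]| + #|[set y a | a in ~: S]| + #|nbhd r B0 S|.
  rewrite /C; do 2 (apply: leq_trans (leq_card_setU _ _) _; rewrite leq_add2r).
  exact: leq_card_setU.
have costSD : #|~: S| + #|nbhd r B0 S| <= #|D| by rewrite -setTD.
lia.
Qed.

Hypothesis htau : 2 * k - 1 <= tau e.

Lemma k_le_size_add_card : k <= size su + #|D|.
Proof. by move: (leq_trans htau (leq_trans (tau_le_vcover vcover_C) card_C)); lia. Qed.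

Let rk (i : 'I_k) := index i (enum (~: D)).
Let xy_end (i : 'I_k) := if e (x i) (g i) then x i else y i.
(* Indices in D use their edge to [g]; the others are sent injectively, by
   their rank in [~: D], to edges of the maximal matching [su], [sv]. *)
Let m (i : 'I_k) : {set T} :=
  if i \in D then [set xy_end i; g i] else [set nth t0 su (rk i); nth t0 sv (rk i)].

Lemma rk_lt i : i \notin D -> rk i < size su.
Proof.
move=> Di; have rk_card : rk i < #|~: D| by rewrite /rk cardE index_mem mem_enum inE.
by move: k_le_size_add_card (cardsC D); rewrite card_ord; lia.
Qed.

Lemma rk_inj : {in ~: D &, injective rk}.
Proof. by move=> i j Di Dj; apply: index_inj; rewrite ?mem_enum. Qed.

Lemma xy_end_mem i : xy_end i \in [set x i; y i].
Proof. by rewrite /xy_end; case: ifP; rewrite !inE eqxx ?orbT. Qed.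

Lemma xy_endZ i : xy_end i \in Z.
Proof. by rewrite /xy_end; case: ifP; rewrite ?xZ ?yZ. Qed.

Lemma xy_end_notin i j : i != j -> xy_end i \notin [set x j; y j].
Proof.
move=> ij; rewrite /xy_end !inE; case: ifP => _.
  by rewrite (inj_eq x_inj) (negbTE ij) (negbTE (xy_dist i j)).
by rewrite (inj_eq y_inj) (negbTE ij) eq_sym (negbTE (xy_dist j i)).
Qed.

Lemma g_notin i : i \in D -> (g i \notin Z) && (g i \notin M).
Proof. by case: mD => _ /[apply] /andP[]; rewrite /B0 in_setD in_setC andbC => /andP[] -> ->. Qed.

Lemma m_notD_sub i : i \notin D -> m i \subset M :\: Z.
Proof.
move=> Di; have lt_rk := rk_lt Di.
have Ms t : t \in su ++ sv -> t \in M :\: Z.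
  by move=> st; rewrite in_setD -in_setC sub_s //= /M in_set.
by rewrite /m (negbTE Di) subUset !sub1set !Ms // mem_cat mem_nth ?orbT // -size_s.
Qed.

Lemma m_edge i : is_edge e (m i).
Proof.
rewrite /m; case: ifP => Di.
  exists (xy_end i), (g i); split=> //; case: mD => _ /(_ i Di) /andP[_].
  by rewrite /r /xy_end; case: ifP.
by exists (nth t0 su (rk i)), (nth t0 sv (rk i)); split=> //; apply/edge_s/rk_lt; rewrite Di.
Qed.

Lemma m_disjoint_mixed i j : i \in D -> j \notin D -> [disjoint m i & m j].
Proof.
move=> Di Dj; have /subsetP sub_mj := m_notD_sub Dj; case/andP: (g_notin Di) => Zg Mg.
rewrite /m Di; apply: disjoint_set2; apply/negP => /sub_mj; rewrite in_setD ?xy_endZ //.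
by rewrite (negbTE Mg) andbF.
Qed.

Lemma m_disjoint i j : i != j -> [disjoint m i & m j].
Proof.
move=> ij; case Di: (i \in D); case Dj: (j \in D).
- case/andP: (g_notin Di) => Zgi _; case/andP: (g_notin Dj) => Zgj _.
  rewrite /m Di Dj; apply: disjoint_set2; rewrite !inE negb_or; apply/andP; split.
  - by apply: (contraNneq _ (xy_end_notin ij)) => ->; apply: xy_end_mem.
  - by apply: (contraNneq _ Zgj) => <-; apply: xy_endZ.
  - by apply: (contraNneq _ Zgi) => ->; apply: xy_endZ.
  by apply: contra ij => /eqP gij; case: mD => g_inj _; rewrite (g_inj _ _ Di Dj gij).
- by apply: m_disjoint_mixed; rewrite ?Dj.
- by rewrite disjoint_sym; apply: m_disjoint_mixed; rewrite ?Di.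
have nD l : l \in D = false -> l \in ~: D by rewrite inE => ->.
rewrite /m Di Dj; apply: disjoint_nth_pairs; rewrite ?rk_lt ?Di ?Dj //.
by apply: contra ij => /eqP/rk_inj ->; rewrite ?nD.
Qed.

Lemma m_avoids i j : i != j -> m i :&: [set x j; y j] = set0.
Proof.
move=> ij; apply/eqP; rewrite setI_eq0; case Di: (i \in D).
  case/andP: (g_notin Di) => Zgi _; rewrite /m Di; apply: disjoint_set2; first exact: xy_end_notin.
  by apply: (contra _ Zgi); case/set2P => ->; rewrite ?xZ ?yZ.
apply: disjointWl (m_notD_sub (negbT Di)) _; rewrite disjoint_sym.
by apply: disjoint_set2; rewrite in_setD ?xZ ?yZ.
Qed.

Lemma good_matching :
  exists m : 'I_k -> {set T},
    (forall i, is_edge e (m i)) /\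
    (forall i j, i != j -> [disjoint m i & m j]) /\
    (forall i j, i != j -> m i :&: [set x j; y j] = set0).
Proof. by exists m; split; [exact: m_edge | split; [exact: m_disjoint | exact: m_avoids]]. Qed.

End MatchingFromCover.

Theorem mainTheorem14 (T : finType) (e : rel T)
    (e_sym : symmetric e) (e_irr : irreflexive e)
    (k : nat) (hk : 1 <= k) (x y : 'I_k -> T)
    (x_inj : injective x) (y_inj : injective y)
    (xy_dist : forall i j, x i != y j)
    (Z_indep : independent e ([set x i | i : 'I_k] :|: [set y i | i : 'I_k]))
    (htau : 2 * k - 1 <= tau e) :
  exists m : 'I_k -> {set T},
    (forall i, is_edge e (m i)) /\
    (forall i j, i != j -> [disjoint m i & m j]) /\
    (forall i j, i != j -> m i :&: [set x j; y j] = set0).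
Proof.
pose Z := [set x i | i : 'I_k] :|: [set y i | i : 'I_k].
pose t0 := x (Ordinal hk).
have [su [sv [size_s uniq_s sub_s edge_s max_s]]] := maximal_matching t0 (~: Z) e_irr.
have [S [D [g [_ _ mD costD]]]] :=
  konig (fun a b => e (x a) b || e (y a) b) t0 setT (~: Z :\: [set t in su ++ sv]).
exact: (good_matching e_sym x_inj y_inj xy_dist Z_indep
          size_s uniq_s sub_s edge_s max_s mD costD htau).
Qed.
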